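(* Let $\mathit{Winner}$ be a unary predicate symbol in $\Phi$, and let $\mathit{Lottery}$ be the sentence $\forall x(\mathit{true}\hookrightarrow\neg\mathit{Winner}(x))\land(\mathit{true}\hookrightarrow\exists x\,\mathit{Winner}(x))$ and $\mathit{Crooked}$ the sentence $\exists y\forall x\,(x\ne y\Rightarrow((\mathit{Winner}(x)\lor\mathit{Winner}(y))\hookrightarrow\mathit{Winner}(y)))$. Let $PL=(\mathit{Dom},W,\mathrm{Pl},\pi)$ be a subjective plausibility structure whose plausibility measure is defined on all subsets of $W$, is qualitative (satisfies A2 and A3), and satisfies A2$^\dagger$ and A3$^*$. Then $\mathit{Lottery}\land\mathit{Crooked}\Rightarrow(\mathit{true}\hookrightarrow\mathit{false})$ holds at every world of $PL$.
   Context: The language $\mathcal{L}^{subj}(\Phi)$ over a first-order vocabulary $\Phi$ is the least set containing the atomic first-order formulas (including equalities) and closed under $\neg,\land,\lor,\Rightarrow$, $\forall x$, $\exists x$, and a binary conditional connective $\hookrightarrow$. $\mathit{true},\mathit{false}$ are a fixed tautology and its negation. A plausibility measure on $W$ is $\mathrm{Pl}:2^W\to D$, $(D,\le)$ a partial order with least element $\bot$ and greatest $\top$, $\mathrm{Pl}(W)=\top$, $\mathrm{Pl}(\emptyset)=\bot$, and $A\subseteq B\Rightarrow\mathrm{Pl}(A)\le\mathrm{Pl}(B)$; $d<d'$ means $d\le d'$ and $d\ne d'$. A subjective plausibility structure is $(\mathit{Dom},W,\mathrm{Pl},\pi)$ with $\mathit{Dom}$ a nonempty set and $\pi(w)$ an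 interpretation of $\Phi$ over $\mathit{Dom}$ for each $w\in W$. Valuations map variables to $\mathit{Dom}$; $v\sim_x v'$ means they agree except possibly on $x$. Satisfaction at $(w,v)$ is as in first-order logic in $(\mathit{Dom},\pi(w))$ for atomic formulas and Boolean connectives; $\forall x\phi$ holds at $(w,v)$ iff $\phi$ holds at $(w,v')$ for all $v'\sim_x v$; $\phi\hookrightarrow\psi$ holds at $(w,v)$ iff $\mathrm{Pl}([\![\phi]\!]_v)=\bot$ or $\mathrm{Pl}([\![\phi\land\psi]\!]_v)>\mathrm{Pl}([\![\phi\land\neg\psi]\!]_v)$, where $[\![\phi]\!]_v=\{w\in W:\phi\text{ holds at }(w,v)\}$. A2: for pairwise disjoint $A,B,C$, if $\mathrm{Pl}(A\cup B)>\mathrm{Pl}(C)$ and $\mathrm{Pl}(A\cup C)>\mathrm{Pl}(B)$ then $\mathrm{Pl}(A)>\mathrm{Pl}(B\cup C)$. A3: $\mathrm{Pl}(A)=\mathrm{Pl}(B)=\bot$ implies $\mathrm{Pl}(A\cup B)=\bot$. A2$^\dagger$: whenever $\{A_i:i\in I\}$ are pairwise disjoint subsets of $W$ with $0\in I$, $A=\bigcup_{i\in I}A_i$, and $\mathrm{Pl}(A_0)>\mathrm{Pl}(A_i)$ for all $i\in I\setminus\{0\}$, then not $\mathrm{Pl}(A_0)<\mathrm{Pl}(A\setminus A_0)$. A3$^*$: for every family $\{A_i:i\in I\}$ of subsets of $W$ with $\mathrm{Pl}(A_i)=\bot$ for all $i$, $\mathrm{Pl}(\bigcup_iA_i)=\bot$.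 *)

From Stdlib Require Import List.
Import ListNotations.

Set Implicit Arguments.

(** A first-order vocabulary: function symbols and predicate symbols.
    (Arities are not tracked; symbols are applied to lists of terms and
    interpreted as functions/relations on lists of domain elements.) *)
Record vocab := Vocab { fsym : Type; psym : Type }.

Inductive term (Phi : vocab) : Type :=
| Var : nat -> term Phi
| App : fsym Phi -> list (term Phi) -> term Phi.

Inductive form (Phi : vocab) : Type :=
| Atom   : psym Phi -> list (term Phi) -> form Phi
| Eq     : term Phi -> term Phi -> form Phi
| Not    : form Phi -> form Phi
| And    : form Phi -> form Phi -> form Phi
| Or     : form Phi -> form Phi -> form Phi
| Imp    : form Phi -> form Phi -> form Phi
| Forall : nat -> form Phi -> form Phi
| Exists : nat -> form Phi -> form Phi
| Cond   : form Phi -> form Phi -> form Phi.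

Arguments Var {Phi}.
Arguments App {Phi}.
Arguments Atom {Phi}.
Arguments Eq {Phi}.
Arguments Not {Phi}.
Arguments And {Phi}.
Arguments Or {Phi}.
Arguments Imp {Phi}.
Arguments Forall {Phi}.
Arguments Exists {Phi}.
Arguments Cond {Phi}.

Definition ftrue {Phi : vocab} : form Phi := Forall 0 (Eq (Var 0) (Var 0)).
Definition ffalse {Phi : vocab} : form Phi := Not ftrue.

Record plaus_measure (W : Type) := PlausMeasure {
  pl_D : Type;
  pl_le : pl_D -> pl_D -> Prop;
  pl_le_refl : forall d, pl_le d d;
  pl_le_antisym : forall d d', pl_le d d' -> pl_le d' d -> d = d';
  pl_le_trans : forall d d' d'', pl_le d d' -> pl_le d' d'' -> pl_le d d'';
  pl_bot : pl_D;
  pl_top : pl_D;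
  pl_bot_least : forall d, pl_le pl_bot d;
  pl_top_greatest : forall d, pl_le d pl_top;
  Pl : (W -> Prop) -> pl_D;
  Pl_full : Pl (fun _ => True) = pl_top;
  Pl_empty : Pl (fun _ => False) = pl_bot;
  Pl_mono : forall A B : W -> Prop, (forall w, A w -> B w) -> pl_le (Pl A) (Pl B)
}.

Arguments pl_le {W} p _ _.
Arguments pl_bot {W} p.
Arguments Pl {W} p _.

Definition pl_lt {W} (P : plaus_measure W) (d d' : pl_D P) : Prop :=
  pl_le P d d' /\ d <> d'.

Definition disjoint {W} (A B : W -> Prop) : Prop := forall w, A w -> B w -> False.
Definition union {W} (A B : W -> Prop) : W -> Prop := fun w => A w \/ B w.

Definition axiom_A2 {W} (P : plaus_measure W) : Prop :=
  forall A B C : W -> Prop,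
    disjoint A B -> disjoint A C -> disjoint B C ->
    pl_lt P (Pl P C) (Pl P (union A B)) ->
    pl_lt P (Pl P B) (Pl P (union A C)) ->
    pl_lt P (Pl P (union B C)) (Pl P A).

Definition axiom_A3 {W} (P : plaus_measure W) : Prop :=
  forall A B : W -> Prop,
    Pl P A = pl_bot P -> Pl P B = pl_bot P -> Pl P (union A B) = pl_bot P.

Definition qualitative {W} (P : plaus_measure W) : Prop :=
  axiom_A2 P /\ axiom_A3 P.

Definition axiom_A2dagger {W} (P : plaus_measure W) : Prop :=
  forall (I : Type) (i0 : I) (Af : I -> W -> Prop),
    (forall i j, i <> j -> disjoint (Af i) (Af j)) ->
    (forall i, i <> i0 -> pl_lt P (Pl P (Af i)) (Pl P (Af i0))) ->
    ~ pl_lt P (Pl P (Af i0))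
              (Pl P (fun w => (exists i, Af i w) /\ ~ Af i0 w)).

Definition axiom_A3star {W} (P : plaus_measure W) : Prop :=
  forall (I : Type) (Af : I -> W -> Prop),
    (forall i, Pl P (Af i) = pl_bot P) ->
    Pl P (fun w => exists i, Af i w) = pl_bot P.

Record interp (Phi : vocab) (Dom : Type) := Interp {
  ifun : fsym Phi -> list Dom -> Dom;
  ipred : psym Phi -> list Dom -> Prop
}.

Record subj_pl_structure (Phi : vocab) := SubjPL {
  sDom : Type;
  sDom_nonempty : inhabited sDom;
  sW : Type;
  sPl : plaus_measure sW;
  spi : sW -> interp Phi sDom
}.

Definition upd {D : Type} (v : nat -> D) (x : nat) (d : D) : nat -> D :=
  fun y => if Nat.eqb y x then d else v y.

Fixpoint eval_term {Phi : vocab} {D : Type} (I : interp Phi D) (v : nat -> D)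
  (t : term Phi) : D :=
  match t with
  | Var x => v x
  | App f ts => ifun I f (map (eval_term I v) ts)
  end.

(** sat M phi v w : phi holds at (w, v).  Note that v' ~_x v iff
    v' = upd v x d for some d. *)
Fixpoint sat {Phi : vocab} (M : subj_pl_structure Phi) (phi : form Phi)
  (v : nat -> sDom M) (w : sW M) {struct phi} : Prop :=
  match phi with
  | Atom p ts => ipred (spi M w) p (map (eval_term (spi M w) v) ts)
  | Eq t1 t2 => eval_term (spi M w) v t1 = eval_term (spi M w) v t2
  | Not p => ~ sat M p v w
  | And p q => sat M p v w /\ sat M q v w
  | Or p q => sat M p v w \/ sat M q v w
  | Imp p q => sat M p v w -> sat M q v w
  | Forall x p => forall d, sat M p (upd v x d) w
  | Exists x p => exists d, sat M p (upd v x d) w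
  | Cond p q =>
      Pl (sPl M) (fun w' => sat M p v w') = pl_bot (sPl M) \/
      pl_lt (sPl M)
        (Pl (sPl M) (fun w' => sat M p v w' /\ ~ sat M q v w'))
        (Pl (sPl M) (fun w' => sat M p v w' /\ sat M q v w'))
  end.

(** The lottery sentences, with x = variable 0 and y = variable 1. *)
Definition Winner {Phi : vocab} (winner : psym Phi) (x : nat) : form Phi :=
  Atom winner [Var x].

Definition Lottery {Phi : vocab} (winner : psym Phi) : form Phi :=
  And (Forall 0 (Cond ftrue (Not (Winner winner 0))))
      (Cond ftrue (Exists 0 (Winner winner 0))).

Definition Crooked {Phi : vocab} (winner : psym Phi) : form Phi :=
  Exists 1 (Forall 0
    (Imp (Not (Eq (Var 0) (Var 1)))
         (Cond (Or (Winner winner 0) (Winner winner 1)) (Winner winner 1)))).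

(* Suppose [true ↪ false] fails, i.e. Pl(W) ≠ ⊥, and let c be the crook.
   Let A0 be the event "c wins or nobody wins" and R the event "somebody
   other than c wins".  By A2, Lottery gives Pl(A0) < Pl(R).  On the other
   hand R is the disjoint union of the pieces "the set of winners is exactly
   S, and c ∉ S"; Crooked bounds each nonempty piece strictly below
   Pl(Win(c)) ≤ Pl(A0), and A3 + A3* show Pl(A0) ≠ ⊥, so every piece lies
   strictly below Pl(A0).  A2† then forbids Pl(A0) < Pl(R). *)
From Stdlib Require Import List Classical.
Import ListNotations.

(* [sat M (Cond p q) v w] unfolds to [pl_cond (sPl M) [[p]]_v [[q]]_v]. *)
Definition pl_cond {W : Type} (P : plaus_measure W) (A B : W -> Prop) : Prop :=
  Pl P A = pl_bot P \/
  pl_lt P (Pl P (fun w => A w /\ ~ B w)) (Pl P (fun w => A w /\ B w)).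

Section Plausibility.
Context {W : Type} {P : plaus_measure W}.

Lemma Pl_ext (A B : W -> Prop) : (forall w, A w <-> B w) -> Pl P A = Pl P B.
Proof. intros AB; apply pl_le_antisym; apply Pl_mono; intros w; apply AB. Qed.

Lemma pl_le_bot_eq {x} : pl_le P x (pl_bot P) -> x = pl_bot P.
Proof. intros le_x; apply pl_le_antisym; [exact le_x | apply pl_bot_least]. Qed.

Lemma Pl_sub_bot {A B : W -> Prop} :
  (forall w, A w -> B w) -> Pl P B = pl_bot P -> Pl P A = pl_bot P.
Proof. intros AB B_bot; apply pl_le_bot_eq; rewrite <- B_bot; now apply Pl_mono. Qed.

Lemma Pl_empty_set (A : W -> Prop) : (forall w, ~ A w) -> Pl P A = pl_bot P.
Proof. intros A0; exact (Pl_sub_bot A0 (Pl_empty P)). Qed.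

Lemma pl_lt_le_trans {a b c} : pl_lt P a b -> pl_le P b c -> pl_lt P a c.
Proof.
  intros [ab ne] bc; split; [now apply pl_le_trans with b |].
  intros ->; apply ne, pl_le_antisym; assumption.
Qed.

Lemma pl_le_lt_trans {a b c} : pl_le P a b -> pl_lt P b c -> pl_lt P a c.
Proof.
  intros ab [bc ne]; split; [now apply pl_le_trans with b |].
  intros <-; apply ne, pl_le_antisym; assumption.
Qed.

Lemma pl_nlt_bot {x} : ~ pl_lt P x (pl_bot P).
Proof. intros [le_x ne]; exact (ne (pl_le_bot_eq le_x)). Qed.

Lemma pl_bot_lt {x} : x <> pl_bot P -> pl_lt P (pl_bot P) x.
Proof. intros ne; split; [apply pl_bot_least | auto]. Qed.

Lemma pl_cond_sure {A B : W -> Prop} :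
  (forall w, A w) -> Pl P (fun _ => True) <> pl_bot P -> pl_cond P A B ->
  pl_lt P (Pl P (fun w => ~ B w)) (Pl P B).
Proof.
  intros A_sure nondeg [A_bot | lt_AB].
  - exfalso; apply nondeg; rewrite <- A_bot; apply Pl_ext; firstorder.
  - rewrite (Pl_ext (fun w => ~ B w) (fun w => A w /\ ~ B w)),
      (Pl_ext B (fun w => A w /\ B w)); [exact lt_AB | firstorder | firstorder].
Qed.

Lemma pl_cond_or_r {A B : W -> Prop} :
  pl_cond P (fun w => A w \/ B w) B ->
  Pl P (fun w => A w /\ ~ B w) = pl_bot P \/
  pl_lt P (Pl P (fun w => A w /\ ~ B w)) (Pl P B).
Proof.
  intros [AB_bot | lt_AB].
  - left; refine (Pl_sub_bot _ AB_bot); tauto.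
  - right; rewrite (Pl_ext (fun w => A w /\ ~ B w) (fun w => (A w \/ B w) /\ ~ B w)),
      (Pl_ext B (fun w => (A w \/ B w) /\ B w)); [exact lt_AB | tauto | tauto].
Qed.

(* A2 applied to the partition X \ Y, Y, ~X of W. *)
Lemma A2_lt_diff {X Y : W -> Prop} :
  axiom_A2 P -> (forall w, Y w -> X w) ->
  pl_lt P (Pl P (fun w => ~ X w)) (Pl P X) ->
  pl_lt P (Pl P Y) (Pl P (fun w => ~ Y w)) ->
  pl_lt P (Pl P (fun w => Y w \/ ~ X w)) (Pl P (fun w => X w /\ ~ Y w)).
Proof.
  intros A2 YX lt_X lt_Y.
  apply (A2 (fun w => X w /\ ~ Y w) Y (fun w => ~ X w)); unfold disjoint, union.
  - tauto.
  - tauto.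
  - firstorder.
  - rewrite (Pl_ext (fun w => (X w /\ ~ Y w) \/ Y w) X); [exact lt_X |].
    intros w; destruct (classic (Y w)); firstorder.
  - rewrite (Pl_ext (fun w => (X w /\ ~ Y w) \/ ~ X w) (fun w => ~ Y w)); [exact lt_Y |].
    intros w; destruct (classic (X w)); firstorder.
Qed.

(* A2† with index set [option K]: [None] names A0, [Some k] the k-fibre of f in R. *)
Lemma A2dagger_fibres {K : Type} (f : W -> K) {A0 R : W -> Prop} :
  axiom_A2dagger P -> disjoint A0 R ->
  (forall k, pl_lt P (Pl P (fun w => R w /\ f w = k)) (Pl P A0)) ->
  ~ pl_lt P (Pl P A0) (Pl P R).
Proof.
  intros A2d A0R fibre_lt.
  set (piece i w := match i with None => A0 w | Some k => R w /\ f w = k end).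
  rewrite (Pl_ext R (fun w => (exists i, piece i w) /\ ~ piece None w)).
  - apply (A2d _ None piece).
    + intros [k|] [k'|] ne w; simpl.
      * intros [_ <-] [_ <-]; exact (ne eq_refl).
      * intros [Rw _] A0w; exact (A0R w A0w Rw).
      * intros A0w [Rw _]; exact (A0R w A0w Rw).
      * contradiction.
    + intros [k|] ne; [apply fibre_lt | congruence].
  - intros w; split.
    + intros Rw; split; [exists (Some (f w)); simpl; auto | exact (fun A0w => A0R w A0w Rw)].
    + intros [[[k|] piece_w] not_A0w]; [apply piece_w | contradiction].
Qed.

End Plausibility.

Section CrookedLottery.
Variables (W D : Type) (P : plaus_measure W) (Win : W -> D -> Prop) (c : D).
Hypotheses (A2 : axiom_A2 P) (A3 : axiom_A3 P)
  (A2d : axiom_A2dagger P) (A3s : axiom_A3star P).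
Hypothesis nondegenerate : Pl P (fun _ => True) <> pl_bot P.
Hypothesis crook_unlikely :
  pl_lt P (Pl P (fun w => Win w c)) (Pl P (fun w => ~ Win w c)).
Hypothesis winner_likely :
  pl_lt P (Pl P (fun w => ~ exists d, Win w d)) (Pl P (fun w => exists d, Win w d)).
Hypothesis crook_beats : forall d, d <> c ->
  Pl P (fun w => Win w d /\ ~ Win w c) = pl_bot P \/
  pl_lt P (Pl P (fun w => Win w d /\ ~ Win w c)) (Pl P (fun w => Win w c)).

Let crook_or_none w := Win w c \/ ~ exists d, Win w d.
Let honest_wins w := (exists d, Win w d) /\ ~ Win w c.

Lemma crook_or_none_not_bot : Pl P crook_or_none <> pl_bot P.
Proof.
  intros crook_or_none_bot.
  assert (crook_bot : Pl P (fun w => Win w c) = pl_bot P).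
  { refine (Pl_sub_bot _ crook_or_none_bot); unfold crook_or_none; tauto. }
  assert (none_bot : Pl P (fun w => ~ exists d, Win w d) = pl_bot P).
  { refine (Pl_sub_bot _ crook_or_none_bot); unfold crook_or_none; tauto. }
  assert (each_bot : forall d, Pl P (fun w => Win w d) = pl_bot P).
  { intros d; destruct (classic (d = c)) as [-> | ne]; [exact crook_bot |].
    assert (honest_bot : Pl P (fun w => Win w d /\ ~ Win w c) = pl_bot P).
    { destruct (crook_beats d ne) as [bot | lt]; [exact bot |].
      rewrite crook_bot in lt; contradiction (pl_nlt_bot lt). }
    refine (Pl_sub_bot _ (A3 _ _ honest_bot crook_bot)).
    intros w; unfold union; tauto. }
  apply nondegenerate.
  refine (Pl_sub_bot _ (A3 _ _ (A3s _ (fun d w => Win w d) each_bot) none_bot)).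
  intros w _; apply classic.
Qed.

Lemma honest_winner_lt d : d <> c ->
  pl_lt P (Pl P (fun w => Win w d /\ ~ Win w c)) (Pl P crook_or_none).
Proof.
  intros ne; destruct (crook_beats d ne) as [bot | lt].
  - rewrite bot; exact (pl_bot_lt crook_or_none_not_bot).
  - apply (pl_lt_le_trans lt), Pl_mono; unfold crook_or_none; tauto.
Qed.

Lemma crook_or_none_lt_honest_wins : pl_lt P (Pl P crook_or_none) (Pl P honest_wins).
Proof.
  apply (A2_lt_diff A2); [firstorder | exact winner_likely | exact crook_unlikely].
Qed.

Lemma crooked_lottery_false : False.
Proof.
  apply (A2dagger_fibres (fun w => Win w) (A0 := crook_or_none) (R := honest_wins) A2d).
  - unfold disjoint, crook_or_none, honest_wins; firstorder.
  - intros S; destruct (classic (exists d, S d /\ d <> c)) as [[d [Sd ne]] | no_honest].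
    + apply (pl_le_lt_trans (b := Pl P (fun w => Win w d /\ ~ Win w c)));
        [apply Pl_mono | exact (honest_winner_lt d ne)].
      intros w [[_ not_crook] <-]; auto.
    + rewrite Pl_empty_set; [exact (pl_bot_lt crook_or_none_not_bot) |].
      intros w [[[d Win_d] not_crook] <-]; apply no_honest; exists d; split; [exact Win_d |].
      now intros ->.
  - exact crook_or_none_lt_honest_wins.
Qed.

End CrookedLottery.

Lemma sat_ftrue {Phi : vocab} {M : subj_pl_structure Phi} {v} w : sat M ftrue v w.
Proof. intros d; reflexivity. Qed.

Theorem proposition5p8 (Phi : vocab) (winner : psym Phi)
  (PL : subj_pl_structure Phi) :
  qualitative (sPl PL) ->
  axiom_A2dagger (sPl PL) ->
  axiom_A3star (sPl PL) ->
  forall (w : sW PL) (v : nat -> sDom PL),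
    sat PL (Imp (And (Lottery winner) (Crooked winner)) (Cond ftrue ffalse)) v w.
Proof.
  intros [A2 A3] A2d A3s w v [[loser_likely winner_likely] [c crooked]].
  set (Win w' d := ipred (spi PL w') winner [d]).
  left; apply NNPP; intros ftrue_not_bot.
  assert (nondeg : Pl (sPl PL) (fun _ => True) <> pl_bot (sPl PL)).
  { intros bot; apply ftrue_not_bot; rewrite <- bot; apply Pl_ext.
    split; [trivial | intros _; apply sat_ftrue]. }
  apply (crooked_lottery_false _ _ _ Win c A2 A3 A2d A3s nondeg).
  - rewrite (Pl_ext (P := sPl PL) (fun w' => Win w' c) (fun w' => ~ ~ Win w' c))
      by (intros; split; [tauto | apply NNPP]).
    exact (pl_cond_sure sat_ftrue nondeg (loser_likely c)).
  - exact (pl_cond_sure sat_ftrue nondeg winner_likely).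
  - intros d ne; apply pl_cond_or_r, (crooked d); exact ne.
Qed.
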